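(* Let $\mathcal{D}$ be an algebra and vector lattice of bounded real functions with the Stone property, and $(\mathcal{E},\mathcal{D})$ a bilinear form such that $(\mathcal{E},\mathcal{D}_0)$ has zero killing and all functionals $L_f(h):=2\mathcal{E}(fh,f)-\mathcal{E}(f^2,h)$, $f\in\mathcal{D}_0$, are positive on $\mathcal{D}$. Then $\mathcal{E}(f)=\frac12\|L_f\|_{\mathcal{D}'}$ for every $f\in\mathcal{D}_0$.
   Context: $\|L\|_{\mathcal{D}'}=\sup\{|L(h)|:h\in\mathcal{D},\|h\|_{\sup}\le1\}$. Stone property: $f\wedge1\in\mathcal{D}$. Bilinear form: symmetric nonnegative definite bilinear, $\mathcal{E}(f)=\mathcal{E}(f,f)$. For $f\ge0$ in $\mathcal{D}$, $E_f:=\{\varphi\in\mathcal{D}:\mathbf 1_{\{f>0\}}\le\varphi\le\mathbf 1\}$; $\mathcal{D}_0^+=\{f\ge0:E_f\ne\emptyset\}$, $\mathcal{D}_0=\mathrm{span}\,\mathcal{D}_0^+$. $(\mathcal{E},\mathcal{D}_0)$ has zero killing if $\inf\{\mathcal{E}(f,\varphi):\varphi\in E_f\}=0$ for all $f\in\mathcal{D}_0^+$. A functional is positive if it is nonnegative on nonnegative functions. *)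

From Stdlib Require Import Reals.
Open Scope R_scope.

Definition fun_set (X : Type) := (X -> R) -> Prop.

Definition fadd {X} (f g : X -> R) : X -> R := fun x => f x + g x.
Definition fscal {X} (c : R) (f : X -> R) : X -> R := fun x => c * f x.
Definition fmul {X} (f g : X -> R) : X -> R := fun x => f x * g x.
Definition fmax {X} (f g : X -> R) : X -> R := fun x => Rmax (f x) (g x).
Definition fmin1 {X} (f : X -> R) : X -> R := fun x => Rmin (f x) 1.
Definition fzero {X} : X -> R := fun _ => 0.

Definition bounded {X} (f : X -> R) : Prop := exists M, forall x, Rabs (f x) <= M.

Definition stone_algebra_lattice {X} (D : fun_set X) : Prop :=
  (forall f, D f -> bounded f) /\
  D fzero /\
  (forall f g, D f -> D g -> D (fadd f g)) /\
  (forall c f, D f -> D (fscal c f)) /\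
  (forall f g, D f -> D g -> D (fmul f g)) /\
  (forall f g, D f -> D g -> D (fmax f g)) /\
  (forall f, D f -> D (fmin1 f)).

Definition bilinear_form {X} (D : fun_set X) (E : (X -> R) -> (X -> R) -> R) : Prop :=
  (forall f g, D f -> D g -> E f g = E g f) /\
  (forall f g h, D f -> D g -> D h -> E (fadd f g) h = E f h + E g h) /\
  (forall c f h, D f -> D h -> E (fscal c f) h = c * E f h) /\
  (forall f, D f -> 0 <= E f f).

Definition Eset {X} (D : fun_set X) (f : X -> R) (phi : X -> R) : Prop :=
  D phi /\ (forall x, 0 < f x -> 1 <= phi x) /\ (forall x, 0 <= phi x <= 1).

Definition D0plus {X} (D : fun_set X) (f : X -> R) : Prop :=
  D f /\ (forall x, 0 <= f x) /\ exists phi, Eset D f phi.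

Inductive span {X} (P : fun_set X) : fun_set X :=
| span_zero : span P fzero
| span_gen : forall f, P f -> span P f
| span_add : forall f g, span P f -> span P g -> span P (fadd f g)
| span_scal : forall c f, span P f -> span P (fscal c f).

Definition D0 {X} (D : fun_set X) : fun_set X := span (D0plus D).

Definition is_glb (S : R -> Prop) (m : R) : Prop :=
  (forall r, S r -> m <= r) /\ (forall b, (forall r, S r -> b <= r) -> b <= m).

Definition zero_killing {X} (D : fun_set X) (E : (X -> R) -> (X -> R) -> R) : Prop :=
  forall f, D0plus D f -> is_glb (fun r => exists phi, Eset D f phi /\ r = E f phi) 0.

Definition Lfun {X} (E : (X -> R) -> (X -> R) -> R) (f h : X -> R) : R :=
  2 * E (fmul f h) f - E (fmul f f) h.

Definition positive_on {X} (D : fun_set X) (L : (X -> R) -> R) : Prop :=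
  forall h, D h -> (forall x, 0 <= h x) -> 0 <= L h.

Definition dual_norm_is {X} (D : fun_set X) (L : (X -> R) -> R) (v : R) : Prop :=
  is_lub (fun r => exists h, D h /\ (forall x, Rabs (h x) <= 1) /\ r = Rabs (L h)) v.

(* For f in D_0 the function f^2 lies in D_0^+, and every psi in E_{f^2} satisfies f psi = f,
   so L_f(psi) = 2 E(f) - E(f^2, psi).  Positivity makes L_f monotone, hence
   |L_f(h)| <= L_f(|h|) <= L_f(max(phi, |h|)) <= 2 E(f) for a cutoff phi of f and ||h|| <= 1;
   conversely zero killing lets E(f^2, psi) tend to 0, so L_f(psi) approaches 2 E(f). *)

From Stdlib Require Import Reals Lra FunctionalExtensionality.
Open Scope R_scope.

Definition fabs {X} (h : X -> R) : X -> R := fmax h (fscal (-1) h).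

Lemma fabs_Rabs {X} (h : X -> R) x : fabs h x = Rabs (h x).
Proof.
  unfold fabs, fmax, fscal, Rmax, Rabs.
  destruct (Rle_dec (h x) (-1 * h x)); destruct (Rcase_abs (h x)); lra.
Qed.

Section StoneForm.

Variables (X : Type) (D : fun_set X) (E : (X -> R) -> (X -> R) -> R).
Hypothesis hD : stone_algebra_lattice D.
Hypothesis hE : bilinear_form D E.

Lemma D_fzero : D fzero.
Proof. destruct hD as (_ & h0 & _); exact h0. Qed.

Lemma D_fadd f g : D f -> D g -> D (fadd f g).
Proof. destruct hD as (_ & _ & hadd & _); exact (hadd f g). Qed.

Lemma D_fscal c f : D f -> D (fscal c f).
Proof. destruct hD as (_ & _ & _ & hscal & _); exact (hscal c f). Qed.

Lemma D_fmul f g : D f -> D g -> D (fmul f g).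
Proof. destruct hD as (_ & _ & _ & _ & hmul & _); exact (hmul f g). Qed.

Lemma D_fmax f g : D f -> D g -> D (fmax f g).
Proof. destruct hD as (_ & _ & _ & _ & _ & hmax & _); exact (hmax f g). Qed.

Lemma D_fabs h : D h -> D (fabs h).
Proof. intros Dh; apply D_fmax, D_fscal; exact Dh. Qed.

Lemma D0_sub_D f : D0 D f -> D f.
Proof.
  induction 1 as [| f [Df _] | | ];
    auto using D_fzero, D_fadd, D_fscal.
Qed.

Lemma D0_cutoff f : D0 D f ->
  exists phi, D phi /\ (forall x, 0 <= phi x <= 1) /\ (forall x, f x <> 0 -> phi x = 1).
Proof.
  induction 1 as [| f [_ [f_ge0 [phi [Dphi [phi_ge1 phi_le1]]]]]
                  | f g _ [p [Dp [p01 p1]]] _ [q [Dq [q01 q1]]]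
                  | c f _ [p [Dp [p01 p1]]]].
  - exists fzero; unfold fzero; split; [exact D_fzero | split; intros x; [lra | tauto]].
  - exists phi; split; [exact Dphi | split; [exact phi_le1 |]].
    intros x fx; specialize (phi_ge1 x); specialize (phi_le1 x); specialize (f_ge0 x).
    assert (fx_pos : 0 < f x) by lra; specialize (phi_ge1 fx_pos); lra.
  - exists (fmax p q); split; [now apply D_fmax | split]; intros x; unfold fmax, Rmax.
    + specialize (p01 x); specialize (q01 x); destruct (Rle_dec (p x) (q x)); lra.
    + unfold fadd; intros fgx.
      destruct (Req_dec (f x) 0) as [fx | fx].
      * rewrite (q1 x) by (intros gx; apply fgx; rewrite fx, gx; ring).
        specialize (p01 x); destruct (Rle_dec (p x) 1); lra.
      * rewrite (p1 x fx); specialize (q01 x); destruct (Rle_dec 1 (q x)); lra.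
  - exists p; split; [exact Dp | split; [exact p01 |]].
    intros x cfx; apply p1; intros fx; apply cfx; unfold fscal; rewrite fx; ring.
Qed.

Lemma Eset_sqr_of_cutoff f psi :
  D psi -> (forall x, 0 <= psi x <= 1) -> (forall x, f x <> 0 -> 1 <= psi x) ->
  Eset D (fmul f f) psi.
Proof.
  intros Dpsi psi01 psi1; split; [exact Dpsi | split; [| exact psi01]].
  intros x ffx; apply psi1; intros fx; unfold fmul in ffx; rewrite fx in ffx; lra.
Qed.

Lemma D0_sqr_D0plus f : D0 D f -> D0plus D (fmul f f).
Proof.
  intros hf; destruct (D0_cutoff f hf) as [phi [Dphi [phi01 phi1]]].
  split; [apply D_fmul; apply D0_sub_D; exact hf | split].
  - intros x; unfold fmul; nra.
  - exists phi; apply Eset_sqr_of_cutoff; [exact Dphi | exact phi01 |].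
    intros x fx; rewrite (phi1 x fx); lra.
Qed.

Lemma fmul_Eset_sqr f psi : Eset D (fmul f f) psi -> fmul f psi = f.
Proof.
  intros [_ [psi_ge1 psi_le1]]; apply functional_extensionality; intros x; unfold fmul.
  destruct (Req_dec (f x) 0) as [fx | fx]; [rewrite fx; ring |].
  assert (psi x = 1) as ->; [| ring].
  specialize (psi_le1 x); assert (1 <= psi x); [| lra].
  apply psi_ge1; unfold fmul; apply Rsqr_pos_lt, fx.
Qed.

Lemma Lfun_Eset_sqr f psi :
  Eset D (fmul f f) psi -> Lfun E f psi = 2 * E f f - E (fmul f f) psi.
Proof. intros Epsi; unfold Lfun; rewrite (fmul_Eset_sqr f psi Epsi); reflexivity. Qed.

Lemma Lfun_sub f a b : D f -> D a -> D b ->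
  Lfun E f (fadd a (fscal (-1) b)) = Lfun E f a - Lfun E f b.
Proof.
  destruct hE as [Esym [Eadd [Escal _]]]; intros Df Da Db; unfold Lfun.
  assert (fmul f (fadd a (fscal (-1) b)) = fadd (fmul f a) (fscal (-1) (fmul f b))) as ->.
  { apply functional_extensionality; intros x; unfold fmul, fadd, fscal; ring. }
  rewrite Eadd, Escal by auto using D_fmul, D_fscal.
  rewrite (Esym (fmul f f)), Eadd, Escal, (Esym a), (Esym b)
    by auto using D_fmul, D_fadd, D_fscal.
  ring.
Qed.

Lemma Lfun_scal f c a : D f -> D a -> Lfun E f (fscal c a) = c * Lfun E f a.
Proof.
  destruct hE as [Esym [_ [Escal _]]]; intros Df Da; unfold Lfun.
  assert (fmul f (fscal c a) = fscal c (fmul f a)) as ->.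
  { apply functional_extensionality; intros x; unfold fmul, fscal; ring. }
  rewrite Escal by auto using D_fmul.
  rewrite (Esym (fmul f f)), Escal, (Esym a) by auto using D_fmul, D_fscal.
  ring.
Qed.

Section PositiveFunctional.

Variable f : X -> R.
Hypothesis hf : D0 D f.
Hypothesis hpos : positive_on D (Lfun E f).

Lemma Lfun_monotone a b : D a -> D b -> (forall x, b x <= a x) ->
  Lfun E f b <= Lfun E f a.
Proof.
  intros Da Db ba.
  enough (diff_ge0 : 0 <= Lfun E f (fadd a (fscal (-1) b))) by
    (rewrite Lfun_sub in diff_ge0 by auto using D0_sub_D; lra).
  apply hpos; [auto using D_fadd, D_fscal |].
  intros x; unfold fadd, fscal; specialize (ba x); lra.
Qed.

Lemma Rabs_Lfun_le h : D h -> Rabs (Lfun E f h) <= Lfun E f (fabs h).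
Proof.
  intros Dh; pose proof (D0_sub_D f hf) as Df.
  assert (Lfun E f h <= Lfun E f (fabs h)).
  { apply Lfun_monotone; auto using D_fabs; intros x; rewrite fabs_Rabs; apply RRle_abs. }
  assert (- Lfun E f h <= Lfun E f (fabs h)).
  { replace (- Lfun E f h) with (Lfun E f (fscal (-1) h)) by (rewrite Lfun_scal by auto; ring).
    apply Lfun_monotone; auto using D_fabs, D_fscal; intros x; rewrite fabs_Rabs.
    unfold fscal; rewrite <- Rabs_Ropp; replace (-1 * h x) with (- h x) by ring.
    apply RRle_abs. }
  unfold Rabs; destruct (Rcase_abs (Lfun E f h)); lra.
Qed.

Hypothesis hzk : is_glb (fun r => exists psi, Eset D (fmul f f) psi /\ r = E (fmul f f) psi) 0.

Lemma Rabs_Lfun_le_energy h : D h -> (forall x, Rabs (h x) <= 1) ->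
  Rabs (Lfun E f h) <= 2 * E f f.
Proof.
  intros Dh h1; destruct (D0_cutoff f hf) as [phi [Dphi [phi01 phi1]]].
  set (psi := fmax phi (fabs h)).
  assert (Epsi : Eset D (fmul f f) psi).
  { apply Eset_sqr_of_cutoff; unfold psi; [auto using D_fmax, D_fabs | |].
    - intros x; unfold fmax, Rmax; rewrite fabs_Rabs.
      specialize (phi01 x); specialize (h1 x); pose proof (Rabs_pos (h x)).
      destruct (Rle_dec (phi x) (Rabs (h x))); lra.
    - intros x fx; rewrite <- (phi1 x fx); apply Rmax_l. }
  assert (Lfun E f (fabs h) <= 2 * E f f - E (fmul f f) psi).
  { rewrite <- (Lfun_Eset_sqr f psi Epsi).
    apply Lfun_monotone; unfold psi; auto using D_fmax, D_fabs; intros x; apply Rmax_r. }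
  assert (0 <= E (fmul f f) psi) by (apply hzk; exists psi; auto).
  pose proof (Rabs_Lfun_le h Dh); lra.
Qed.

Lemma energy_le_dual_bound b :
  (forall r, (exists h, D h /\ (forall x, Rabs (h x) <= 1) /\ r = Rabs (Lfun E f h)) -> r <= b) ->
  2 * E f f <= b.
Proof.
  intros hb.
  enough (2 * E f f - b <= 0) by lra.
  apply hzk; intros r [psi [Epsi ->]].
  assert (Rabs (Lfun E f psi) <= b).
  { apply hb; exists psi; destruct Epsi as [Dpsi [_ psi01]].
    repeat split; [exact Dpsi |]; intros x; specialize (psi01 x).
    rewrite Rabs_right; lra. }
  pose proof (RRle_abs (Lfun E f psi)); rewrite (Lfun_Eset_sqr f psi Epsi) in *; lra.
Qed.

End PositiveFunctional.

End StoneForm.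

Theorem corollaryC (X : Type) (D : fun_set X) (E : (X -> R) -> (X -> R) -> R)
  (hD : stone_algebra_lattice D) (hE : bilinear_form D E)
  (hzk : zero_killing D E)
  (hpos : forall f, D0 D f -> positive_on D (Lfun E f)) :
  forall f, D0 D f -> dual_norm_is D (Lfun E f) (2 * E f f).
Proof.
  intros f hf.
  pose proof (hzk _ (D0_sqr_D0plus X D hD f hf)) as hzk_f.
  split.
  - intros r [h [Dh [h1 ->]]].
    exact (Rabs_Lfun_le_energy X D E hD hE f hf (hpos f hf) hzk_f h Dh h1).
  - exact (energy_le_dual_bound X D E f hzk_f).
Qed.
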